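(* Let $X$ and $Y$ be real Banach spaces such that $(\mathcal F(X),Y)$ has the Bishop-Phelps-Bollob\'as property for compact operators witnessed by a function $\varepsilon\mapsto\eta(\varepsilon)$. Let $0<\varepsilon<1$, $f\in\mathrm{Lip}_{0\mathcal K}(X,Y)$ with $\|f\|=1$, and $(x,y)\in\widetilde X$ with $\frac{\|f(x)-f(y)\|}{\|x-y\|}>1-\eta(\varepsilon)$. Then for every $h\in\mathrm{Lip}_0(X,Y)$ with $\|h\|=1$ and $\frac{\|h(x)-h(y)\|}{\|x-y\|}=1$, there exist $g\in\mathrm{Lip}_{0\mathcal K}(X,Y)$ with $\|g\|=1$, $z\in S_Y$ and a sequence $(v_n,w_n)\in\widetilde X$ such that $\|g-f\|<\varepsilon$, $\frac{\|h(v_n)-h(w_n)\|}{\|v_n-w_n\|}>1-\varepsilon$ for every $n$, and $\frac{g(v_n)-g(w_n)}{\|v_n-w_n\|}\to z$.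
   Context: $\widetilde X=\{(x,y)\in X^2:x\neq y\}$. $\mathrm{Lip}_0(X,Y)$ is the Banach space of Lipschitz $f\colon X\to Y$ with $f(0)=0$ and norm $\|f\|=\sup_{(x,y)\in\widetilde X}\|f(x)-f(y)\|/\|x-y\|$; $\mathrm{Lip}_{0\mathcal K}(X,Y)$ is the subspace of those $f$ whose set of slopes $\{\frac{f(x)-f(y)}{\|x-y\|}:(x,y)\in\widetilde X\}$ is relatively compact. $\mathcal F(X)$ is the closed span of $\{\delta_x:x\in X\}$ in $\mathrm{Lip}_0(X,\mathbb R)^*$, $\delta_x(g)=g(x)$. A pair $(Z,Y)$ has the BPBp for compact operators witnessed by a function $\eta\colon(0,1)\to(0,\infty)$ if for every $\varepsilon\in(0,1)$, whenever $T\colon Z\to Y$ is compact linear with $\|T\|=1$ and $w\in S_Z$ satisfies $\|Tw\|>1-\eta(\varepsilon)$, there exist compact linear $S\colon Z\to Y$ with $\|S\|=1$ and $v\in S_Z$ with $\|Sv\|=1$, $\|S-T\|<\varepsilon$, $\|v-w\|<\varepsilon$. *)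

From HB Require Import structures.
From mathcomp Require Import all_boot all_order all_algebra.
From mathcomp Require Import all_classical all_reals all_analysis.
From mathcomp Require Import Rstruct Rstruct_topology.
From Stdlib Require Import Rdefinitions.
Set Implicit Arguments. Unset Strict Implicit. Unset Printing Implicit Defensive.
Import Order.TTheory GRing.Theory Num.Theory.
Import numFieldNormedType.Exports.
Local Open Scope classical_set_scope.
Local Open Scope ring_scope.

Notation RR := Rdefinitions.R.

Section LipDefs.
Variables (X Y : normedModType RR).

Definition slope (f : X -> Y) (x y : X) : Y := (`|x - y|)^-1 *: (f x - f y).

Definition isLip0 (f : X -> Y) : Prop :=
  f 0 = 0 /\ exists k : RR, forall x y : X, `|f x - f y| <= k * `|x - y|.

Definition lipnorm (f : X -> Y) : RR :=
  sup [set `|f p.1 - f p.2| / `|p.1 - p.2| | p in [set p : X * X | p.1 != p.2]].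

Definition isLip0K (f : X -> Y) : Prop :=
  isLip0 f /\
  compact (closure [set slope f p.1 p.2 | p in [set p : X * X | p.1 != p.2]]).
End LipDefs.

Section FreeSpace.
Variable X : normedModType RR.

(* Elements of Lip_0(X,R)^* are represented as functions phi : (X -> R) -> R,
   normalized to vanish on non-Lip_0 functions. *)
Definition deltas_comb (s : seq (RR * X)) (g : X -> RR^o) : RR :=
  \sum_(p <- s) p.1 * g p.2.

(* F(X): closure (in the dual norm of Lip_0(X,R)) of span {delta_x : x in X} *)
Definition Free : set ((X -> RR^o) -> RR) :=
  [set phi | (forall g : X -> RR^o, ~ isLip0 g -> phi g = 0) /\
     forall e : RR, 0 < e -> exists s : seq (RR * X),
       forall g : X -> RR^o, isLip0 g -> `|phi g - deltas_comb s g| <= e * lipnorm g].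

Definition freenorm (phi : (X -> RR^o) -> RR) : RR :=
  sup [set `|phi g| | g in [set g : X -> RR^o | isLip0 g /\ lipnorm g <= 1]].

Definition fsub (phi psi : (X -> RR^o) -> RR) : (X -> RR^o) -> RR :=
  fun g => phi g - psi g.

Variable Y : normedModType RR.

(* operators F(X) -> Y (only their values on Free matter) *)
Definition is_linear_on_Free (T : ((X -> RR^o) -> RR) -> Y) : Prop :=
  forall (a : RR) phi psi, Free phi -> Free psi ->
    T (fun g => a * phi g + psi g) = a *: T phi + T psi.

Definition Free_ball : set ((X -> RR^o) -> RR) :=
  [set phi | Free phi /\ freenorm phi <= 1].

Definition is_compact_op (T : ((X -> RR^o) -> RR) -> Y) : Prop :=
  is_linear_on_Free T /\ compact (closure (T @` Free_ball)).

Definition opnorm (T : ((X -> RR^o) -> RR) -> Y) : RR :=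
  sup [set `|T phi| | phi in Free_ball].

Definition BPBp_compact (eta : RR -> RR) : Prop :=
  forall eps : RR, 0 < eps < 1 ->
  forall T : ((X -> RR^o) -> RR) -> Y, is_compact_op T -> opnorm T = 1 ->
  forall w, Free w -> freenorm w = 1 -> `|T w| > 1 - eta eps ->
  exists (S : ((X -> RR^o) -> RR) -> Y) (v : (X -> RR^o) -> RR),
    is_compact_op S /\ opnorm S = 1 /\ Free v /\ freenorm v = 1 /\ `|S v| = 1 /\
    opnorm (fun phi => S phi - T phi) < eps /\ freenorm (fsub v w) < eps.
End FreeSpace.

(* The BPB property is applied to the linearization T_f : F(X) -> Y of f, the operator
   with T_f delta_p = f p. It is compact because f has relatively compact slopes, and it
   nearly attains its norm at the molecule m_xy = (delta_x - delta_y) / |x - y|. The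
   resulting operator S defines g p := S delta_p, whose slopes are the values of S at
   molecules.
   To find the pairs (v_n, w_n), approximate the point v where S attains its norm by a
   finite combination of point masses and, by a finite-dimensional Hahn-Banach argument,
   rewrite it as a combination of molecules whose coefficients have total mass close to
   |v| = 1. Since |S v| = 1 and v nearly takes the value 1 at the 1-Lipschitz function
   p |-> |h p - h y| - |h 0 - h y|, averaging over these molecules yields one at which the
   slope of g is almost 1 and the slope of h exceeds 1 - eps. Compactness of the slopes
   of g then gives a convergent subsequence. *)

From Pilot Require Import Defs.
From mathcomp Require Import all_boot all_order all_algebra.
From mathcomp Require Import all_classical all_reals all_analysis.
From mathcomp Require Import Rstruct Rstruct_topology.
From mathcomp Require Import finmap.
From mathcomp Require Import ring lra.
Import Order.TTheory GRing.Theory Num.Theory.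
Import numFieldNormedType.Exports.
Local Open Scope classical_set_scope.
Local Open Scope ring_scope.
Set Implicit Arguments. Unset Strict Implicit. Unset Printing Implicit Defensive.

Section HahnBanachStep.
Variables (R : realType) (Q : (nat -> R) -> R).
Hypothesis QD : forall b1 b2, Q (fun i => b1 i + b2 i) <= Q b1 + Q b2.
Hypothesis QZ : forall t b, 0 <= t -> Q (fun i => t * b i) = t * Q b.

Definition truncate (k : nat) (b : nat -> R) i := if (i < k)%N then b i else 0.

Definition pairing (k : nat) (c b : nat -> R) := \sum_(i < k) c i * b i.

Definition dominated k c := forall b, pairing k c b <= Q (truncate k b).

Lemma pairingD k c b1 b2 :
  pairing k c (fun i => b1 i + b2 i) = pairing k c b1 + pairing k c b2.
Proof. by rewrite /pairing -big_split /=; apply: eq_bigr => i _; rewrite mulrDr. Qed.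

Lemma pairingZ k c t b : pairing k c (fun i => t * b i) = t * pairing k c b.
Proof. by rewrite /pairing mulr_sumr; apply: eq_bigr => i _; rewrite mulrCA. Qed.

Lemma pairing_extend k c d b :
  pairing k.+1 (fun i => if i == k then d else c i) b = pairing k c b + d * b k.
Proof.
rewrite /pairing big_ord_recr /= eqxx.
by under eq_bigr => i _ do rewrite (ltn_eqF (ltn_ord i)).
Qed.

Lemma truncateS k b :
  truncate k.+1 b = fun i => truncate k b i + b k * (if i == k then 1 else 0).
Proof.
apply: funext => i; rewrite /truncate ltnS leq_eqVlt.
by case: (eqVneq i k) => [->|ik] /=; [rewrite ltnn mulr1 add0r | rewrite mulr0 addr0].
Qed.

Lemma sublinear0 : Q (fun=> 0) = 0.
Proof.
transitivity (Q (fun i => 0 * (fun=> 0 : R) i)); last by rewrite QZ // mul0r.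
by congr Q; apply: funext => i; rewrite mul0r.
Qed.

Lemma dominated_extend k c :
  dominated k c -> exists d, dominated k.+1 (fun i => if i == k then d else c i).
Proof.
(* The new coefficient is [sup A]: every element of [A] is below every [B m'] by
   sublinearity, and the two bounds are what domination needs for [b k < 0] and [b k > 0]. *)
move=> hv.
pose ek : nat -> R := fun i => if i == k then 1 else 0.
pose A := [set pairing k c m - Q (fun i => truncate k m i - ek i) | m in setT].
pose B m := Q (fun i => truncate k m i + ek i) - pairing k c m.
have AB r m' : A r -> r <= B m'.
  move=> [m _ <-]; rewrite /B.
  suff : pairing k c m + pairing k c m' <=
         Q (fun i => truncate k m i - ek i) + Q (fun i => truncate k m' i + ek i) by lra.
  rewrite -pairingD; apply: le_trans (hv _) (le_trans _ (QD _ _)).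
  suff -> : truncate k (fun i => m i + m' i) =
    (fun i => truncate k m i - ek i + (truncate k m' i + ek i)) by [].
  by apply: funext => i; rewrite /truncate; case: ifP => _; lra.
have hA : has_sup A.
  split; last by exists (B (fun=> 0)) => r /AB.
  by exists (pairing k c (fun=> 0) - Q (fun i => truncate k (fun=> 0) i - ek i)), (fun=> 0).
exists (sup A) => b; rewrite pairing_extend truncateS -/ek.
have [bk_lt0|bk_gt0|->] := ltgtP (b k) 0.
- pose m i := (- b k)^-1 * b i.
  have -> : (fun i => truncate k b i + b k * ek i) = (fun i => - b k * (truncate k m i - ek i)).
    by apply: funext => i; rewrite /truncate /m; case: ifP => _; field; lra.
  rewrite QZ; last by lra.
  have := sup_upper_bound hA (ex_intro2 _ _ m I erefl).
  have -> : pairing k c b = - b k * pairing k c m by rewrite pairingZ mulrA mulfV ?mul1r //; lra.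
  nra.
- pose m i := (b k)^-1 * b i.
  have -> : (fun i => truncate k b i + b k * ek i) = (fun i => b k * (truncate k m i + ek i)).
    by apply: funext => i; rewrite /truncate /m; case: ifP => _; field; lra.
  rewrite QZ; last by lra.
  have : sup A <= B m by apply: ge_sup; [case: hA | move=> r /AB].
  have -> : pairing k c b = b k * pairing k c m by rewrite pairingZ mulrA mulfV ?mul1r //; lra.
  rewrite /B; nra.
- rewrite mulr0 addr0.
  suff -> : (fun i => truncate k b i + 0 * ek i) = truncate k b by exact: hv.
  by apply: funext => i; rewrite mul0r addr0.
Qed.

End HahnBanachStep.

Section HahnBanachFin.
Variables (R : realType) (n : nat) (q : (nat -> R) -> R).
Hypothesis qD : forall b1 b2, q (fun i => b1 i + b2 i) <= q b1 + q b2.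
Hypothesis qZ : forall t b, 0 <= t -> q (fun i => t * b i) = t * q b.
Hypothesis q_local : forall b b', (forall i, (i < n)%N -> b i = b' i) -> q b = q b'.

Lemma sublinear_opp_ge a : - q a <= q (fun i => - a i).
Proof.
suff : 0 <= q a + q (fun i => - a i) by lra.
rewrite -(sublinear0 qZ); apply: le_trans (qD _ _) => //.
suff -> : (fun i => a i + - a i) = (fun=> 0) by [].
by apply: funext => i; rewrite subrr.
Qed.

Lemma hahn_banach_fin (a : nat -> R) : exists l : nat -> R,
  (forall b : nat -> R, \sum_(i < n) l i * b i <= q b) /\ \sum_(i < n) l i * a i = q a.
Proof.
(* Coordinate 0 of [Q] carries the multiple of [a]: the functional [t a |-> t q(a)]
   is extended to the [n] remaining coordinates one at a time. *)
pose Q be := q (fun i => be 0%N * a i + be i.+1).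
have QD b1 b2 : Q (fun i => b1 i + b2 i) <= Q b1 + Q b2.
  rewrite /Q; apply: le_trans (qD _ _).
  suff -> : (fun i => (b1 0%N + b2 0%N) * a i + (b1 i.+1 + b2 i.+1)) =
    (fun i => b1 0%N * a i + b1 i.+1 + (b2 0%N * a i + b2 i.+1)) by [].
  by apply: funext => i /=; rewrite mulrDl; lra.
have QZ t b : 0 <= t -> Q (fun i => t * b i) = t * Q b.
  move=> t0; rewrite /Q -qZ //; congr q; apply: funext => i /=.
  by rewrite mulrDr mulrA.
have base : dominated Q 1 (fun=> q a).
  move=> b; rewrite /pairing big_ord1 /Q /truncate /=.
  under [X in _ <= q X]funext => i do rewrite addr0.
  have [b0|b0] := leP 0 (b 0%N); first by rewrite qZ // mulrC.
  under [X in _ <= q X]funext => i do rewrite -mulrNN.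
  by rewrite qZ; [have := sublinear_opp_ge a; nra | lra].
have ext k : exists c, c 0%N = q a /\ dominated Q k.+1 c.
  elim: k => [|k [c [c0 hv]]]; first by exists (fun=> q a).
  have [d hd] := dominated_extend QD QZ hv.
  by exists (fun i => if i == k.+1 then d else c i).
have [c [c0 hv]] := ext n.
have c_dom b0 (b : nat -> R) : c 0%N * b0 + \sum_(i < n) c i.+1 * b i <=
    q (fun i => b0 * a i + (if (i < n)%N then b i else 0)).
  have := hv (fun i => if i is j.+1 then b j else b0).
  by rewrite /pairing big_ord_recl /= /Q /truncate.
exists (fun i => c i.+1); split.
  move=> b; have := c_dom 0 b; rewrite mulr0 add0r => /le_trans; apply.
  by rewrite (q_local (b' := b)) // => i ->; lra.
have k1 := c_dom (-1) a; have k2 := c_dom 1 (fun i => - a i).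
rewrite (q_local (b' := fun=> 0)) ?(sublinear0 qZ) in k1; last by move=> i ->; lra.
rewrite (q_local (b' := fun=> 0)) ?(sublinear0 qZ) in k2; last by move=> i ->; lra.
have : \sum_(i < n) c i.+1 * - a i = - \sum_(i < n) c i.+1 * a i.
  by rewrite -sumrN; apply: eq_bigr => i _; rewrite mulrN.
lra.
Qed.

End HahnBanachFin.

Section LipschitzBasics.
Variables (X Y : normedModType RR).
Implicit Types (f : X -> Y) (p q : X).

Definition slopes_norm f :=
  [set `|f p.1 - f p.2| / `|p.1 - p.2| | p in [set p : X * X | p.1 != p.2]].

Lemma norm_sub_gt0 p q : p != q -> 0 < `|p - q|.
Proof. by rewrite normr_gt0 subr_eq0. Qed.

Lemma norm_slope f p q : `|slope f p q| = `|f p - f q| / `|p - q|.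
Proof. by rewrite /slope normrZ normfV normr_id mulrC. Qed.

Lemma slopes_norm_le f c : (forall p q, `|f p - f q| <= c * `|p - q|) ->
  forall r, slopes_norm f r -> r <= c.
Proof. by move=> hc _ [[p q] /= /norm_sub_gt0 pq <-]; rewrite ler_pdivrMr. Qed.

Lemma lipnorm_ge0 f : 0 <= lipnorm f.
Proof.
have [hs|hs] := pselect (has_sup (slopes_norm f)); last by rewrite /lipnorm sup_out.
have [[r Er] _] := hs; apply: le_trans (sup_upper_bound hs Er).
by case: Er => p _ <-; rewrite divr_ge0.
Qed.

Lemma lipnorm_le f c : 0 <= c -> (forall p q, `|f p - f q| <= c * `|p - q|) ->
  lipnorm f <= c.
Proof.
move=> c0 hc; change (sup (slopes_norm f) <= c).
have [[r Er]|ne] := pselect (slopes_norm f !=set0).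
  by apply: ge_sup; [exists r | exact: slopes_norm_le].
suff -> : slopes_norm f = set0 by rewrite sup0.
by apply/seteqP; split => // r Er; apply: ne; exists r.
Qed.

Lemma lipnorm_bound f : isLip0 f -> forall p q, `|f p - f q| <= lipnorm f * `|p - q|.
Proof.
move=> [_ [k hk]] p q; have [->|pq] := eqVneq p q; first by rewrite !subrr !normr0 mulr0.
rewrite -ler_pdivrMr ?norm_sub_gt0 //; apply: sup_upper_bound; last by exists (p, q).
split; first by exists (`|f p - f q| / `|p - q|), (p, q).
by exists k; apply: slopes_norm_le.
Qed.

Lemma norm_slope_le_lipnorm f : isLip0 f -> forall p q, `|slope f p q| <= lipnorm f.
Proof.
move=> hf p q; have [->|pq] := eqVneq p q.
  by rewrite /slope !subrr scaler0 normr0 lipnorm_ge0.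
by rewrite norm_slope ler_pdivrMr ?norm_sub_gt0 // lipnorm_bound.
Qed.

Lemma lip_of_slope_le f c : 0 <= c -> (forall p q, p != q -> `|slope f p q| <= c) ->
  forall p q, `|f p - f q| <= c * `|p - q|.
Proof.
move=> c0 h p q; have [->|pq] := eqVneq p q; first by rewrite !subrr !normr0 mulr0.
by rewrite -ler_pdivrMr ?norm_sub_gt0 // -norm_slope h.
Qed.

Lemma isLip0_zero : isLip0 (fun _ : X => 0 : Y).
Proof. by split => //; exists 0 => p q; rewrite subrr normr0 mul0r. Qed.

Lemma isLip0_lipnorm_eq0 f : isLip0 f -> lipnorm f = 0 -> f = fun=> 0.
Proof.
move=> hf f_0; apply: funext => p; have := lipnorm_bound hf p 0.
by case: hf => -> _; rewrite f_0 mul0r !subr0 normr_le0 => /eqP.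
Qed.

End LipschitzBasics.

Lemma lipnorm_le1_norm_slope_le1 (X Y : normedModType RR) (f : X -> Y) :
  isLip0 f -> lipnorm f <= 1 -> forall p q, `|slope f p q| <= 1.
Proof. by move=> hf hf1 p q; apply: le_trans (norm_slope_le_lipnorm hf p q) hf1. Qed.

Section MolecularDecomposition.
Variable X : normedModType RR.

Definition comb (V : normedModType RR) (F : X -> V) (s : seq (RR * X)) : V :=
  \sum_(p <- s) p.1 *: F p.2.

Definition mol_comb (V : normedModType RR) (F : X -> V) (t : seq (RR * (X * X))) : V :=
  \sum_(u <- t) u.1 *: slope F u.2.1 u.2.2.

Definition mol_cost (t : seq (RR * (X * X))) : RR := \sum_(u <- t) `|u.1|.

Definition distinct_pairs (t : seq (RR * (X * X))) := forall u, u \in t -> u.2.1 != u.2.2.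

Lemma mol_cost_ge0 t : 0 <= mol_cost t.
Proof. exact: sumr_ge0. Qed.

Lemma mol_comb_cat (V : normedModType RR) (F : X -> V) t1 t2 :
  mol_comb F (t1 ++ t2) = mol_comb F t1 + mol_comb F t2.
Proof. exact: big_cat. Qed.

Variable s : seq (RR * X).
Let n := size s.
Let xs i := (nth (0, 0) s i).2.
Let as_ i := (nth (0, 0) s i).1.

Definition mol_rep (c : nat -> RR) t := distinct_pairs t /\
  forall (V : normedModType RR) (F : X -> V), F 0 = 0 ->
    \sum_(i < n) c i *: F (xs i) = mol_comb F t.

Definition mol_norm c := inf [set mol_cost t | t in mol_rep c].

Lemma mol_rep_exists c : exists t, mol_rep c t.
Proof.
pose t := [seq (c i * `|xs i|, (xs i, 0 : X)) | i : 'I_n <- enum 'I_n & xs i != 0].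
exists t; split; first by move=> u /mapP [i]; rewrite mem_filter => /andP [h _] ->.
move=> V F F0; rewrite /mol_comb big_map big_filter big_enum_cond /= [RHS]big_mkcond /=.
apply: eq_bigr => i _; case: eqP => [->|/eqP xi0] /=; first by rewrite F0 scaler0.
by rewrite /slope !subr0 F0 subr0 scalerA -mulrA mulfV ?mulr1 ?normr_eq0.
Qed.

Lemma has_inf_mol_costs c : has_inf [set mol_cost t | t in mol_rep c].
Proof.
split; first by have [t ht] := mol_rep_exists c; exists (mol_cost t), t.
by exists 0 => _ [t _ <-]; apply: mol_cost_ge0.
Qed.

Lemma mol_norm_le_cost c t : mol_rep c t -> mol_norm c <= mol_cost t.
Proof. by move=> ht; apply: (ge_inf (has_inf_mol_costs c).2); exists t. Qed.

Lemma mol_norm_ge0 c : 0 <= mol_norm c.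
Proof.
apply: lb_le_inf; first by case: (has_inf_mol_costs c).
by move=> _ [t _ <-]; apply: mol_cost_ge0.
Qed.

Lemma mol_norm_adherent c e : 0 < e -> exists t, mol_rep c t /\ mol_cost t < mol_norm c + e.
Proof. by move=> e0; have [_ [t ht <-] lt] := inf_adherent e0 (has_inf_mol_costs c); exists t. Qed.

Lemma mol_repD c1 c2 t1 t2 :
  mol_rep c1 t1 -> mol_rep c2 t2 -> mol_rep (fun i => c1 i + c2 i) (t1 ++ t2).
Proof.
move=> [g1 h1] [g2 h2]; split; first by move=> u; rewrite mem_cat => /orP [/g1|/g2].
move=> V F F0; rewrite mol_comb_cat -h1 // -h2 // -big_split /=.
by apply: eq_bigr => i _; rewrite scalerDl.
Qed.

Lemma mol_repZ a c t :
  mol_rep c t -> mol_rep (fun i => a * c i) [seq (a * u.1, u.2) | u <- t].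
Proof.
move=> [g h]; split; first by move=> u /mapP [u0 /g hu ->].
move=> V F F0; under eq_bigr => i _ do rewrite -scalerA.
rewrite -scaler_sumr h // /mol_comb big_map scaler_sumr.
by apply: eq_bigr => u _; rewrite scalerA.
Qed.

Lemma mol_normD c1 c2 : mol_norm (fun i => c1 i + c2 i) <= mol_norm c1 + mol_norm c2.
Proof.
apply/ler_addgt0Pr => e e0; have e20 : 0 < e / 2 by rewrite divr_gt0.
have [t1 [r1 l1]] := mol_norm_adherent c1 e20.
have [t2 [r2 l2]] := mol_norm_adherent c2 e20.
apply: le_trans (mol_norm_le_cost (mol_repD r1 r2)) _.
rewrite /mol_cost big_cat /= -/(mol_cost t1) -/(mol_cost t2); lra.
Qed.

Lemma mol_normZ_le a c : 0 < a -> mol_norm (fun i => a * c i) <= a * mol_norm c.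
Proof.
move=> a0; apply/ler_addgt0Pr => e e0.
have [t [r l]] := mol_norm_adherent c (divr_gt0 e0 a0).
apply: le_trans (mol_norm_le_cost (mol_repZ a r)) _.
rewrite /mol_cost big_map; under eq_bigr => u _ do rewrite normrM gtr0_norm //.
rewrite -mulr_sumr -/(mol_cost t).
have := ler_wpM2l (ltW a0) (ltW l).
by rewrite mulrDr mulrCA mulfV ?mulr1 ?gt_eqF.
Qed.

Lemma mol_normZ a c : 0 <= a -> mol_norm (fun i => a * c i) = a * mol_norm c.
Proof.
rewrite le_eqVlt => /orP [/eqP <-|a0].
  apply/eqP; rewrite mul0r eq_le mol_norm_ge0 andbT.
  have : mol_rep (fun i => 0 * c i) [::].
    by split => // V F F0; rewrite /mol_comb big_nil big1 // => i _; rewrite mul0r scale0r.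
  by move/mol_norm_le_cost; rewrite /mol_cost big_nil.
apply/eqP; rewrite eq_le mol_normZ_le //=.
have := @mol_normZ_le a^-1 (fun i => a * c i); rewrite invr_gt0 => /(_ a0).
have -> : (fun i => a^-1 * (a * c i)) = c by apply: funext => i; rewrite mulKf ?gt_eqF.
by rewrite -(ler_pM2l a0) mulVKf ?gt_eqF.
Qed.

Lemma mol_norm_local b b' : (forall i, (i < n)%N -> b i = b' i) -> mol_norm b = mol_norm b'.
Proof.
move=> hb; rewrite /mol_norm; congr inf; apply/seteqP.
by split => _ [t [g h] <-]; exists t => //; split => // V F F0;
  rewrite -h //; apply: eq_bigr => i _; rewrite hb.
Qed.

Lemma mol_norm_le_dist (b : nat -> RR) (p q : X) :
  (forall (V : normedModType RR) (F : X -> V), F 0 = 0 ->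
     \sum_(i < n) b i *: F (xs i) = F p - F q) ->
  mol_norm b <= `|p - q|.
Proof.
have [<-|pq] := eqVneq p q => hb.
  have : mol_rep b [::] by split => // V F F0; rewrite hb // subrr /mol_comb big_nil.
  by move/mol_norm_le_cost; rewrite /mol_cost big_nil subrr normr0.
have : mol_rep b [:: (`|p - q|, (p, q))].
  split; first by move=> u; rewrite mem_seq1 => /eqP ->.
  move=> V F F0; rewrite hb // /mol_comb big_seq1 /slope scalerA mulfV ?scale1r //.
  by rewrite normr_eq0 subr_eq0.
by move/mol_norm_le_cost; rewrite /mol_cost big_seq1 normr_id.
Qed.

Definition unit_vec (i : nat) : nat -> RR := fun k => if k == i then 1 else 0.

Lemma sum_unit_vecZ (V : normedModType RR) (G : nat -> V) i : (i < n)%N ->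
  \sum_(k < n) unit_vec i k *: G k = G i.
Proof.
move=> ilt; rewrite (bigD1 (Ordinal ilt)) //= /unit_vec eqxx scale1r big1 ?addr0 //.
by move=> k; rewrite -val_eqE /= => /negbTE ->; rewrite scale0r.
Qed.

Lemma sum_mul_unit_vec (G : nat -> RR) i : (i < n)%N -> \sum_(k < n) G k * unit_vec i k = G i.
Proof.
move=> ilt; rewrite (bigD1 (Ordinal ilt)) //= /unit_vec eqxx mulr1 big1 ?addr0 //.
by move=> k; rewrite -val_eqE /= => /negbTE ->; rewrite mulr0.
Qed.

Section McShane.
Variable l : nat -> RR.
Hypothesis l_le : forall b : nat -> RR, \sum_(i < n) l i * b i <= mol_norm b.

Lemma dominated_sub_le i j : (i < n)%N -> (j < n)%N -> l i - l j <= `|xs i - xs j|.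
Proof.
move=> il jl; have := l_le (fun k => unit_vec i k - unit_vec j k).
rewrite -(sum_mul_unit_vec l il) -(sum_mul_unit_vec l jl) -sumrB.
under eq_bigr => k _ do rewrite mulrBr.
move/le_trans; apply; apply: mol_norm_le_dist => V F F0.
rewrite -(sum_unit_vecZ (fun k => F (xs k)) il) -(sum_unit_vecZ (fun k => F (xs k)) jl) -sumrB.
by apply: eq_bigr => k _; rewrite scalerBl.
Qed.

Lemma dominated_le_norm i : (i < n)%N -> `|l i| <= `|xs i|.
Proof.
move=> il; rewrite ler_norml lerNl; apply/andP; split.
  have := l_le (fun k => - unit_vec i k).
  under eq_bigr => k _ do rewrite mulrN.
  rewrite sumrN sum_mul_unit_vec // => /le_trans; apply; rewrite -[X in _ <= X]normrN -sub0r.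
  apply: mol_norm_le_dist => V F F0.
  rewrite F0 sub0r -(sum_unit_vecZ (fun k => F (xs k)) il) -sumrN.
  by apply: eq_bigr => k _; rewrite scaleNr.
have := l_le (unit_vec i); rewrite sum_mul_unit_vec // => /le_trans; apply.
rewrite -[X in _ <= `|X|]subr0; apply: mol_norm_le_dist => V F F0.
by rewrite F0 subr0 (sum_unit_vecZ (fun k => F (xs k))).
Qed.

(* The McShane extension of [l] from the points [xs i] and the point [0], where it is [0]. *)
Definition mcshane (p : X) : RR := \big[Order.min/`|p|]_(i < n) (l i + `|p - xs i|).

Lemma mcshane_xs i : (i < n)%N -> mcshane (xs i) = l i.
Proof.
move=> il; apply/eqP; rewrite eq_le; apply/andP; split.
  by apply: le_trans (bigmin_le _ (Ordinal il) _) _; rewrite /= subrr normr0 addr0.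
apply: le_bigmin; first by have := dominated_le_norm il; rewrite ler_norml => /andP [].
by move=> k _; have := dominated_sub_le il (ltn_ord k); rewrite distrC; lra.
Qed.

Lemma mcshane0 : mcshane 0 = 0.
Proof.
apply/eqP; rewrite eq_le; apply/andP; split.
  by apply: le_trans (bigmin_le_id _ _ _ _) _; rewrite normr0.
apply: le_bigmin; first by rewrite normr0.
by move=> k _; rewrite sub0r normrN; have := dominated_le_norm (ltn_ord k); rewrite ler_norml; lra.
Qed.

Lemma mcshane_sub_le p q : mcshane p - mcshane q <= `|p - q|.
Proof.
suff : mcshane p - `|p - q| <= mcshane q by lra.
apply: le_bigmin.
  have : mcshane p <= `|p| by apply: bigmin_le_id.
  by have := ler_distD q p 0; rewrite !subr0 distrC; lra.
move=> k _; have : mcshane p <= l k + `|p - xs k| by apply: bigmin_le.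
by have := ler_distD q p (xs k); rewrite distrC; lra.
Qed.

Lemma mcshane_lip p q : `|mcshane p - mcshane q| <= 1 * `|p - q|.
Proof.
rewrite mul1r ler_norml mcshane_sub_le andbT lerNl opprB distrC.
exact: mcshane_sub_le.
Qed.

Lemma isLip0_mcshane : isLip0 (mcshane : X -> RR^o).
Proof. by split; [exact: mcshane0 | exists 1; exact: mcshane_lip]. Qed.

Lemma lipnorm_mcshane : lipnorm (mcshane : X -> RR^o) <= 1.
Proof. by apply: lipnorm_le => // p q; apply: mcshane_lip. Qed.

End McShane.

Lemma comb_nth (V : normedModType RR) (F : X -> V) : comb F s = \sum_(i < n) as_ i *: F (xs i).
Proof. by rewrite /comb (big_nth (0, 0)) big_mkord. Qed.

(* Hahn-Banach applied to the molecular norm of [s] produces a 1-Lipschitz test function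
   (the McShane extension) at which [s] takes the value [mol_norm]. *)
Lemma molecular_decomposition E : 0 <= E ->
  (forall g : X -> RR^o, isLip0 g -> `|deltas_comb s g| <= E * lipnorm g) ->
  forall e, 0 < e -> exists t, [/\ distinct_pairs t, mol_cost t <= E + e &
    forall (V : normedModType RR) (F : X -> V), F 0 = 0 -> comb F s = mol_comb F t].
Proof.
move=> E0 hE e e0.
have [l [l_le l_as]] := hahn_banach_fin mol_normD mol_normZ mol_norm_local as_.
have mol_le : mol_norm as_ <= E.
  rewrite -l_as; under eq_bigr => i _ do rewrite -(mcshane_xs l_le (ltn_ord i)) mulrC.
  rewrite -(comb_nth (mcshane l : X -> RR^o)).
  apply: le_trans (ler_norm _) (le_trans (hE _ (isLip0_mcshane l_le)) _).
  by rewrite ler_piMr // lipnorm_mcshane.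
have [t [[gt ht] lt]] := mol_norm_adherent as_ e0.
by exists t; split => //; [lra | move=> V F F0; rewrite comb_nth ht].
Qed.

End MolecularDecomposition.

Lemma norm_le_mul_eq0 (V : normedModType RR) (v : V) K : 0 <= K ->
  (forall e, 0 < e -> `|v| <= e * K) -> v = 0.
Proof.
move=> K0 h; apply/normr0_eq0/eqP; rewrite eq_le normr_ge0 andbT.
apply/ler_addgt0Pr => e e0; rewrite add0r.
have K1 : 0 < K + 1 by lra.
apply: le_trans (h (e / (K + 1)) (divr_gt0 e0 K1)) _.
by rewrite mulrAC ler_pdivrMr // ler_pM2l //; lra.
Qed.

Section FreeBasics.
Variable X : normedModType RR.
Implicit Types (phi psi : (X -> RR^o) -> RR) (g : X -> RR^o) (s : seq (RR * X)).

(* Elements of [Free] are normalized to vanish off [Lip_0], whence the test. *)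
Definition fin_free s : (X -> RR^o) -> RR :=
  fun g => if `[< isLip0 g >] then deltas_comb s g else 0.

Definition fin_approx phi e s :=
  forall g, isLip0 g -> `|phi g - deltas_comb s g| <= e * lipnorm g.

Definition scale_comb (a : RR) s := [seq (a * p.1, p.2) | p <- s].

Lemma fin_free_Free s : Free (fin_free s).
Proof.
split; first by move=> g ng; rewrite /fin_free asboolF.
move=> e e0; exists s => g lg; rewrite /fin_free asboolT // subrr normr0.
by rewrite mulr_ge0 ?lipnorm_ge0 ?ltW.
Qed.

Lemma fin_approx_fin_free s : fin_approx (fin_free s) 0 s.
Proof. by move=> g lg; rewrite /fin_free asboolT // subrr normr0 mul0r. Qed.

Lemma fin_free_nil : fin_free [::] = fun=> 0.
Proof. by apply: funext => g; rewrite /fin_free /deltas_comb big_nil; case: ifP. Qed.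

Lemma deltas_comb_cat s1 s2 g :
  deltas_comb (s1 ++ s2) g = deltas_comb s1 g + deltas_comb s2 g.
Proof. exact: big_cat. Qed.

Lemma deltas_combZ a s g : deltas_comb (scale_comb a s) g = a * deltas_comb s g.
Proof. by rewrite /deltas_comb big_map mulr_sumr; apply: eq_bigr => p _; rewrite mulrA. Qed.

Lemma comb_cat (V : normedModType RR) (F : X -> V) s1 s2 :
  comb F (s1 ++ s2) = comb F s1 + comb F s2.
Proof. exact: big_cat. Qed.

Lemma combZ (V : normedModType RR) (F : X -> V) a s : comb F (scale_comb a s) = a *: comb F s.
Proof. by rewrite /comb big_map scaler_sumr; apply: eq_bigr => p _; rewrite scalerA. Qed.

Lemma isLip0Z g c : isLip0 g -> isLip0 (fun p => c * g p : RR^o).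
Proof.
move=> [g0 [k hk]]; split; first by rewrite g0 mulr0.
by exists (`|c| * k) => p q; rewrite -mulrBr normrM -mulrA ler_wpM2l.
Qed.

Lemma fin_approx_le phi e e' s : fin_approx phi e s -> e <= e' -> fin_approx phi e' s.
Proof. by move=> h ee g lg; apply: le_trans (h g lg) _; rewrite ler_wpM2r // lipnorm_ge0. Qed.

Lemma fin_approx_lin phi psi a e1 e2 s1 s2 : fin_approx phi e1 s1 -> fin_approx psi e2 s2 ->
  fin_approx (fun g => a * phi g + psi g) (`|a| * e1 + e2) (scale_comb a s1 ++ s2).
Proof.
move=> h1 h2 g lg; rewrite deltas_comb_cat deltas_combZ.
have -> : a * phi g + psi g - (a * deltas_comb s1 g + deltas_comb s2 g) =
   a * (phi g - deltas_comb s1 g) + (psi g - deltas_comb s2 g) by ring.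
apply: le_trans (ler_normD _ _) _; rewrite normrM mulrDl -mulrA.
by apply: lerD; [apply: ler_wpM2l => //; exact: h1 | exact: h2].
Qed.

Lemma Free_lin phi psi a : Free phi -> Free psi -> Free (fun g => a * phi g + psi g).
Proof.
move=> [n1 F1] [n2 F2]; split; first by move=> g ng; rewrite n1 // n2 // mulr0 addr0.
move=> e e0; have a1 : 0 < `|a| + 1 by rewrite ltr_wpDl.
have [s1 h1] : exists s1, fin_approx phi (e / (2 * (`|a| + 1))) s1.
  by apply: F1; rewrite divr_gt0 // mulr_gt0.
have [s2 h2] : exists s2, fin_approx psi (e / 2) s2 by apply: F2; rewrite divr_gt0.
exists (scale_comb a s1 ++ s2); apply: fin_approx_le (fin_approx_lin a h1 h2) _.
have -> : `|a| * (e / (2 * (`|a| + 1))) = e / 2 * (`|a| / (`|a| + 1)).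
  by field; rewrite gt_eqF.
have : `|a| / (`|a| + 1) <= 1 by rewrite ler_pdivrMr // mul1r; lra.
by have := ltW (divr_gt0 e0 (ltr0Sn _ 1)); nra.
Qed.

Lemma FreeZ phi c g : Free phi -> isLip0 g -> phi (fun p => c * g p) = c * phi g.
Proof.
move=> [_ hF] lg; apply/eqP; rewrite -subr_eq0; apply/eqP.
apply: (@norm_le_mul_eq0 RR^o _ (lipnorm (fun p => c * g p : RR^o) + `|c| * lipnorm g)).
  by rewrite addr_ge0 ?mulr_ge0 ?lipnorm_ge0.
move=> e e0; have [s hs] := hF e e0.
have -> : phi (fun p => c * g p) - c * phi g =
  (phi (fun p => c * g p) - deltas_comb s (fun p => c * g p)) - c * (phi g - deltas_comb s g).
  suff -> : deltas_comb s (fun p => c * g p) = c * deltas_comb s g by ring.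
  by rewrite /deltas_comb mulr_sumr; apply: eq_bigr => p _; rewrite mulrCA.
apply: le_trans (ler_normB _ _) _; rewrite normrM mulrDr.
by apply: lerD; [exact: hs (isLip0Z c lg) | rewrite mulrCA ler_wpM2l // hs].
Qed.

Let test_fns := [set g : X -> RR^o | isLip0 g /\ lipnorm g <= 1].

Lemma test_fns0 : test_fns (fun=> 0).
Proof.
split; first exact: isLip0_zero.
by apply: lipnorm_le => // p q; rewrite subrr normr0 mul1r.
Qed.

Lemma has_sup_freenorm phi : Free phi -> has_sup [set `|phi g| | g in test_fns].
Proof.
move=> [_ hF]; split; first by exists `|phi (fun=> 0)|, (fun=> 0); first exact: test_fns0.
have [s hs] := hF 1 ltr01.
exists (\sum_(p <- s) `|p.1| * `|p.2| + 1) => _ [g [lg Lg] <-].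
have hc : `|deltas_comb s g| <= \sum_(p <- s) `|p.1| * `|p.2|.
  apply: le_trans (ler_norm_sum _ _ _) (ler_sum _ _) => p _; rewrite normrM ler_wpM2l //.
  have := lipnorm_bound lg p.2 0; case: (lg) => -> _; rewrite !subr0 => /le_trans; apply.
  by rewrite ler_piMl.
have := hs g lg; rewrite mul1r.
have : `|phi g| <= `|phi g - deltas_comb s g| + `|deltas_comb s g|.
  by rewrite -{1}(subrK (deltas_comb s g) (phi g)) ler_normD.
lra.
Qed.

Lemma freenorm_ge0 phi : Free phi -> 0 <= freenorm phi.
Proof.
move=> hphi; apply: le_trans (normr_ge0 (phi (fun=> 0))) _.
apply: (sup_upper_bound (has_sup_freenorm hphi)).
by exists (fun=> 0); first exact: test_fns0.
Qed.

Lemma freenorm_le phi c : 0 <= c -> (forall g, isLip0 g -> lipnorm g <= 1 -> `|phi g| <= c) ->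
  freenorm phi <= c.
Proof.
move=> c0 hc; apply: ge_sup; first by exists `|phi (fun=> 0)|, (fun=> 0); first exact: test_fns0.
by move=> _ [g [lg Lg] <-]; apply: hc.
Qed.

Lemma Free_le_freenorm phi g : Free phi -> isLip0 g -> `|phi g| <= freenorm phi * lipnorm g.
Proof.
move=> hphi lg; have := lipnorm_ge0 g; rewrite le_eqVlt => /orP [/eqP L0|L0].
  rewrite -L0 (isLip0_lipnorm_eq0 lg (esym L0)) mulr0.
  rewrite -[fun=> 0](funext (fun p => mul0r (0 : RR^o))) FreeZ ?mul0r ?normr0 //.
  exact: isLip0_zero.
set L := lipnorm g in L0 *.
have lg' := isLip0Z L^-1 lg.
have Lg' : lipnorm (fun p => L^-1 * g p : RR^o) <= 1.
  apply: lipnorm_le => // p q; rewrite -mulrBr normrM gtr0_norm ?invr_gt0 //.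
  by rewrite mul1r ler_pdivrMl //; exact: lipnorm_bound lg p q.
have := sup_upper_bound (has_sup_freenorm hphi) (ex_intro2 _ _ _ (conj lg' Lg') erefl).
by rewrite FreeZ // normrM gtr0_norm ?invr_gt0 // ler_pdivrMl // mulrC.
Qed.

Lemma fin_approx_norm_le phi e s : Free phi -> fin_approx phi e s ->
  forall g, isLip0 g -> `|deltas_comb s g| <= (freenorm phi + e) * lipnorm g.
Proof.
move=> hphi hs g lg; have := hs g lg; have := Free_le_freenorm hphi lg.
have := ler_normB (phi g) (phi g - deltas_comb s g).
rewrite (_ : phi g - (phi g - deltas_comb s g) = deltas_comb s g); last by ring.
rewrite mulrDl; lra.
Qed.

Lemma freenorm_fin_approx_le phi e s : Free phi -> 0 <= e -> fin_approx phi e s ->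
  freenorm (fun g => -1 * fin_free s g + phi g) <= e.
Proof.
move=> hphi e0 hs; apply: freenorm_le => // g lg Lg.
rewrite /fin_free asboolT // mulN1r addrC; apply: le_trans (hs g lg) _.
by rewrite ler_piMr.
Qed.

End FreeBasics.

Lemma Free_ball_mol_approx (X : normedModType RR) (phi : (X -> RR^o) -> RR) e :
  Free phi -> freenorm phi <= 1 -> 0 < e ->
  exists s t, [/\ fin_approx phi e s, distinct_pairs t, mol_cost t <= 1 + 2 * e &
    forall (V : normedModType RR) (F : X -> V), F 0 = 0 -> comb F s = mol_comb F t].
Proof.
move=> hphi phi1 e0; have [_ hF] := hphi; have [s hs] := hF e e0.
have s_le g : isLip0 g -> `|deltas_comb s g| <= (1 + e) * lipnorm g.
  move=> lg; apply: le_trans (fin_approx_norm_le hphi hs lg) _.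
  by rewrite ler_wpM2r ?lipnorm_ge0 ?lerD2r.
have [|t [gt ct ht]] := molecular_decomposition _ s_le e0; first by rewrite addr_ge0 ?ltW.
by exists s, t; split => //; lra.
Qed.

Lemma invSn_gt0 (k : nat) : 0 < (k.+1%:R : RR)^-1.
Proof. by rewrite invr_gt0 ltr0Sn. Qed.

Lemma invSn_lt (e : RR) : 0 < e -> exists N, forall k, (N <= k)%N -> k.+1%:R^-1 < e.
Proof. by move=> e0; have [N _ hN] := near_infty_natSinv_lt (PosNum e0); exists N. Qed.

Section Linearization.
Variables (X : normedModType RR) (Y : completeNormedModType RR) (f : X -> Y).
Hypotheses (hf : isLip0 f) (hf1 : lipnorm f <= 1).
Implicit Types (phi psi : (X -> RR^o) -> RR) (s : seq (RR * X)).

Lemma norm_mol_comb_le t : `|mol_comb f t| <= mol_cost t.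
Proof.
apply: le_trans (ler_norm_sum _ _ _) (ler_sum _ _) => u _.
by rewrite normrZ ler_piMr // lipnorm_le1_norm_slope_le1.
Qed.

Lemma norm_comb_le s E : 0 <= E ->
  (forall g : X -> RR^o, isLip0 g -> `|deltas_comb s g| <= E * lipnorm g) -> `|comb f s| <= E.
Proof.
(* No functional on [Y] is needed: a molecular decomposition of [s] bounds [comb f s]
   by its cost. *)
move=> E0 hE; apply/ler_addgt0Pr => e e0.
have [t [_ ct ht]] := molecular_decomposition E0 hE e0.
by rewrite (ht Y f hf.1); apply: le_trans (norm_mol_comb_le t) ct.
Qed.

Lemma fin_approx_comb_dist phi e1 e2 s1 s2 : fin_approx phi e1 s1 -> fin_approx phi e2 s2 ->
  0 <= e1 -> 0 <= e2 -> `|comb f s1 - comb f s2| <= e1 + e2.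
Proof.
move=> h1 h2 e10 e20.
rewrite -scaleN1r -combZ -comb_cat; apply: norm_comb_le; first exact: addr_ge0.
move=> g lg; rewrite deltas_comb_cat deltas_combZ mulN1r mulrDl.
have := h1 g lg; have := h2 g lg.
have := ler_distD (phi g) (deltas_comb s1 g) (deltas_comb s2 g).
rewrite (distrC (deltas_comb s1 g) (phi g)); lra.
Qed.

Definition fin_approx_seq phi k := xget [::] [set s | fin_approx phi k.+1%:R^-1 s].

Lemma fin_approx_seqP phi k : Free phi -> fin_approx phi k.+1%:R^-1 (fin_approx_seq phi k).
Proof.
move=> [_ hF]; apply: (xgetPex [::] (P := [set s | fin_approx phi k.+1%:R^-1 s])).
exact/hF/invSn_gt0.
Qed.

Definition linearization phi : Y := lim ((fun k => comb f (fin_approx_seq phi k)) @ \oo).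

Lemma cvg_linearization phi : Free phi -> cvg ((fun k => comb f (fin_approx_seq phi k)) @ \oo).
Proof.
move=> hphi; apply: cauchy_cvg; apply: cauchy_exP => e e0.
have [N hN] := invSn_lt (divr_gt0 e0 (ltr0Sn _ 1)).
exists (comb f (fin_approx_seq phi N)), N => // k /= hk; rewrite -ball_normE /ball_ /=.
have := fin_approx_comb_dist (fin_approx_seqP N hphi) (fin_approx_seqP k hphi)
  (ltW (invSn_gt0 _)) (ltW (invSn_gt0 _)).
have := hN N (leqnn N); have := hN k hk.
by move: (k.+1%:R^-1) (N.+1%:R^-1) => z1 z2; lra.
Qed.

Lemma linearization_fin_approx phi e s : Free phi -> 0 <= e -> fin_approx phi e s ->
  `|linearization phi - comb f s| <= e.
Proof.
move=> hphi e0 hs; apply/ler_addgt0Pr => d d0.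
have d20 : 0 < d / 2 by rewrite divr_gt0.
have [N1 _ h1] := cvgr_dist_lt _ _ (cvg_linearization hphi) (d / 2) d20.
have [N2 hN2] := invSn_lt d20.
pose k := maxn N1 N2.
have := h1 k (leq_maxl _ _); have := hN2 k (leq_maxr _ _).
have := fin_approx_comb_dist (fin_approx_seqP k hphi) hs (ltW (invSn_gt0 _)) e0.
have := ler_distD (comb f (fin_approx_seq phi k)) (linearization phi) (comb f s).
by move: (k.+1%:R^-1) => z; lra.
Qed.

Lemma linearization_fin_free s : linearization (fin_free s) = comb f s.
Proof.
apply/eqP; rewrite -subr_eq0 -normr_le0.
exact: linearization_fin_approx (fin_free_Free s) (lexx 0) (fin_approx_fin_free s).
Qed.

Lemma linearization_lin : is_linear_on_Free linearization.
Proof.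
move=> a phi psi hphi hpsi; set chi := fun g => _.
have hchi : Free chi by apply: Free_lin.
apply/eqP; rewrite -subr_eq0; apply/eqP.
apply: (@norm_le_mul_eq0 _ _ (2 * `|a| + 2)); first by rewrite addr_ge0 ?mulr_ge0.
move=> e e0; have [[_ F1] [_ F2]] := (hphi, hpsi).
have [s1 h1] := F1 _ e0; have [s2 h2] := F2 _ e0.
have m0 := linearization_fin_approx hchi (addr_ge0 (mulr_ge0 (normr_ge0 a) (ltW e0)) (ltW e0))
  (fin_approx_lin a h1 h2).
have m1 := linearization_fin_approx hphi (ltW e0) h1.
have m2 := linearization_fin_approx hpsi (ltW e0) h2.
rewrite comb_cat combZ in m0.
have := ler_distD (a *: comb f s1 + comb f s2) (linearization chi)
  (a *: linearization phi + linearization psi).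
have -> : a *: comb f s1 + comb f s2 - (a *: linearization phi + linearization psi) =
    a *: (comb f s1 - linearization phi) + (comb f s2 - linearization psi).
  by rewrite scalerBr opprD addrACA.
have := ler_normD (a *: (comb f s1 - linearization phi)) (comb f s2 - linearization psi).
rewrite normrZ (distrC (comb f s1)) (distrC (comb f s2)).
have := ler_wpM2l (normr_ge0 a) m1.
nra.
Qed.

Lemma norm_linearization_le phi : Free phi -> `|linearization phi| <= freenorm phi.
Proof.
move=> hphi; apply/ler_addgt0Pr => e e0.
have e20 : 0 < e / 2 by rewrite divr_gt0.
have [_ F] := hphi; have [s hs] := F _ e20.
have m := linearization_fin_approx hphi (ltW e20) hs.
have b : `|comb f s| <= freenorm phi + e / 2.
  by apply: norm_comb_le (fin_approx_norm_le hphi hs); rewrite addr_ge0 ?freenorm_ge0 ?ltW.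
have := ler_distD (comb f s) (linearization phi) 0; rewrite !subr0; lra.
Qed.

End Linearization.

Section TotallyBounded.
Variable V : normedModType RR.
Implicit Types A B K : set V.

Definition totally_bounded A := forall e, 0 < e -> exists D : seq V,
  forall a, A a -> exists2 y, y \in D & `|a - y| < e.

Lemma compact_totally_bounded K : compact K -> totally_bounded K.
Proof.
rewrite compact_cover => cK e e0.
have [k Kk|D _ hD] := cK V K (fun k => ball k e) (fun k _ => ball_open k e).
  by exists k => //; apply: ballxx.
exists (enum_fset D) => a /hD [y yD hy]; exists y => //.
by rewrite -ball_normE /= distrC in hy.
Qed.

End TotallyBounded.

Section TotallyBoundedCombinations.
Variable V : normedModType RR.
Implicit Types A B : set V.

Lemma totally_bounded_approx A :
  (forall e, 0 < e -> exists2 B, totally_bounded B &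
     forall a, A a -> exists2 b, B b & `|a - b| < e) ->
  totally_bounded A.
Proof.
move=> h e e0; have e20 : 0 < e / 2 by rewrite divr_gt0.
have [B hB hAB] := h _ e20; have [D hD] := hB _ e20.
exists D => a /hAB [b /hD [y yD byl] abl]; exists y => //.
by have := ler_distD b a y; lra.
Qed.

Lemma totally_bounded_add A B : totally_bounded A -> totally_bounded B ->
  totally_bounded [set a + b | a in A & b in B].
Proof.
move=> hA hB e e0; have e20 : 0 < e / 2 by rewrite divr_gt0.
have [DA hDA] := hA _ e20; have [DB hDB] := hB _ e20.
exists [seq x + y | x <- DA, y <- DB] => _ [a /hDA [x xD ax] [b /hDB [y yD bY] <-]].
exists (x + y); first by apply/allpairsP; exists (x, y).
rewrite opprD addrACA; have := ler_normD (a - x) (b - y); lra.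
Qed.

Lemma totally_bounded_segment (k : V) (M : RR) :
  totally_bounded [set c *: k | c in `[- M, M]].
Proof.
move=> e e0; have k1 : 0 < `|k| + 1 by rewrite ltr_wpDl.
have [D hD] := compact_totally_bounded (@segment_compact RR (- M) M) (divr_gt0 e0 k1).
exists (map (fun c => c *: k) D) => _ [c /hD [r rD cr] <-].
exists (r *: k); first exact: map_f.
rewrite -scalerBl normrZ; apply: le_lt_trans (_ : `|c - r| * (`|k| + 1) < e).
  by rewrite ler_wpM2l // lerDl.
by rewrite -ltr_pdivlMr.
Qed.

Fixpoint box_comb (k : seq V) (M : RR) : set V :=
  if k is k0 :: k' then [set a + b | a in [set c *: k0 | c in `[- M, M]] & b in box_comb k' M]
  else [set 0].

Lemma totally_bounded_box_comb k M : totally_bounded (box_comb k M).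
Proof.
elim: k => [|k0 k IH] /=; last exact: totally_bounded_add (totally_bounded_segment _ _) IH.
by move=> e e0; exists [:: 0] => a ->; exists 0; rewrite ?mem_seq1 // subrr normr0.
Qed.

Lemma box_comb_sum k M (c : nat -> RR) : (forall i, (i < size k)%N -> `|c i| <= M) ->
  box_comb k M (\sum_(i < size k) c i *: nth 0 k i).
Proof.
elim: k c => [|k0 k IH] c hc /=; first by rewrite big_ord0.
rewrite big_ord_recl /=; exists (c 0%N *: k0).
  by exists (c 0%N) => //; have := hc 0%N isT; rewrite in_itv /= ler_norml.
exists (\sum_(i < size k) c (bump 0 i) *: nth 0 k i) => //.
by apply: (IH (fun i => c i.+1)) => i hi; apply: hc.
Qed.

Lemma totally_bounded_absconv A M : totally_bounded A ->
  totally_bounded [set \sum_(u <- t) u.1 *: u.2 |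
    t in [set t : seq (RR * V) | (forall u, u \in t -> A u.2) /\ \sum_(u <- t) `|u.1| <= M]].
Proof.
move=> hA; apply: totally_bounded_approx => e e0.
have M1 : 0 < `|M| + 1 by rewrite ltr_wpDl.
have [k hk] := hA _ (divr_gt0 e0 M1).
exists (box_comb k M); first exact: totally_bounded_box_comb.
move=> _ [t [tA tM] <-].
pose near (u : RR * V) := [set i | (i < size k)%N /\ `|u.2 - nth 0 k i| < e / (`|M| + 1)].
pose iu (u : RR * V) := xget 0%N (near u).
have iuP u : u \in t -> near u (iu u).
  move=> /tA /hk [y yk hy]; apply: (xgetPex 0%N (P := near u)).
  by exists (index y k); split; rewrite ?index_mem ?nth_index.
pose c i := \sum_(u <- t | iu u == i) u.1.
exists (\sum_(i < size k) c i *: nth 0 k i).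
  apply: box_comb_sum => i _; apply: le_trans tM; apply: le_trans (ler_norm_sum _ _ _) _.
  rewrite [X in _ <= X](bigID (fun u => iu u == i)) /= lerDl.
  exact: sumr_ge0.
have -> : \sum_(i < size k) c i *: nth 0 k i = \sum_(u <- t) u.1 *: nth 0 k (iu u).
  rewrite /c; under eq_bigr do rewrite scaler_suml big_mkcond /=.
  rewrite exchange_big /= big_seq [RHS]big_seq; apply: eq_bigr => u ut.
  have [il _] := iuP u ut.
  rewrite (bigD1 (Ordinal il)) //= eqxx big1 ?addr0 // => i.
  by rewrite -val_eqE /= eq_sym => /negbTE ->.
rewrite -sumrB; apply: le_lt_trans (ler_norm_sum _ _ _) _.
apply: le_lt_trans (_ : \sum_(u <- t) `|u.1| * (e / (`|M| + 1)) < e).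
  rewrite big_seq [X in _ <= X]big_seq; apply: ler_sum => u ut.
  by rewrite -scalerBr normrZ ler_wpM2l // ltW //; case: (iuP u ut).
rewrite -mulr_suml mulrA ltr_pdivrMr //.
by have := ler_norm M; nra.
Qed.

End TotallyBoundedCombinations.

Lemma ultra_setU (T : Type) (F : set_system T) (A B : set T) :
  UltraFilter F -> F (A `|` B) -> F A \/ F B.
Proof.
move=> UF FAB; have [FA|FnA] := in_ultra_setVsetC A UF; first by left.
by right; apply: filterS (filterI FAB FnA) => x [[Ax|Bx] nAx].
Qed.

Lemma totally_bounded_compact (V : completeNormedModType RR) (A : set V) :
  totally_bounded A -> compact (closure A).
Proof.
(* An ultrafilter containing a finite union of balls contains one of them, hence
   ultrafilters on [A] are Cauchy. *)
move=> hA; rewrite compact_ultra => F UF FA.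
have PF : ProperFilter F by apply: ultra_proper.
have cF : cauchy F.
  apply: cauchy_exP => e e0; have e20 : 0 < e / 2 by rewrite divr_gt0.
  have [D hD] := hA _ e20.
  have cov : closure A `<=` \big[setU/set0]_(y <- D) ball y e.
    move=> z Az; have [a [/hD [y yD ay] za]] := Az _ (nbhsx_ballx z (e / 2) e20).
    rewrite -ball_normE /= in za.
    have : ball y e z.
      rewrite -ball_normE /=; have := ler_distD a y z.
      rewrite (distrC y a) (distrC a z); lra.
    elim: D yD {hD} => // d D IH; rewrite inE big_cons => /orP [/eqP <-|/IH h b];
      [by left | by right; apply: h].
  have : F (\big[setU/set0]_(y <- D) ball y e) by apply: filterS cov FA.
  elim: D {hD cov} => [|d D IH]; first by rewrite big_nil => /filter_not_empty.
  by rewrite big_cons => /(ultra_setU UF) [Fd|/IH //]; exists d.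
have cvF : cvg F by apply: cauchy_cvg.
exists (lim F); split => //.
rewrite (closure_id (closure A)).1; last exact: closed_closure.
by move=> N /cvF FN; apply: filter_ex (filterI FA FN).
Qed.

Section Molecules.
Variable X : normedModType RR.

Definition mol_seq (p q : X) : seq (RR * X) := [:: (`|p - q|^-1, p); (- `|p - q|^-1, q)].

Definition molecule (p q : X) := fin_free (mol_seq p q).

Lemma comb_mol_seq (V : normedModType RR) (F : X -> V) p q : comb F (mol_seq p q) = slope F p q.
Proof. by rewrite /comb !big_cons big_nil addr0 /slope scalerBr scaleNr. Qed.

Lemma molecule_Free p q : Free (molecule p q).
Proof. exact: fin_free_Free. Qed.

Lemma molecule_lip p q (g : X -> RR^o) : isLip0 g -> molecule p q g = slope g p q.
Proof. by move=> lg; rewrite /molecule /fin_free asboolT // -comb_mol_seq. Qed.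

Lemma freenorm_molecule_le1 p q : freenorm (molecule p q) <= 1.
Proof.
apply: freenorm_le => // g lg Lg; rewrite molecule_lip //.
exact: (lipnorm_le1_norm_slope_le1 lg Lg p q).
Qed.

Lemma molecule_ball p q : Free_ball (molecule p q).
Proof. by split; [exact: molecule_Free | exact: freenorm_molecule_le1]. Qed.

End Molecules.

Section DistanceTest.
Variables (X Z : normedModType RR) (F : X -> Z) (y : X).
Hypothesis F1 : forall p q, `|F p - F q| <= `|p - q|.

Definition dist_test (p : X) : RR^o := `|F p - F y| - `|F 0 - F y|.

Lemma dist_test_sub_le p q : `|dist_test p - dist_test q| <= `|F p - F q|.
Proof.
have -> : dist_test p - dist_test q = `|F p - F y| - `|F q - F y| by rewrite /dist_test; ring.
by have := ler_dist_dist (F p - F y) (F q - F y); rewrite opprB addrA subrK.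
Qed.

Lemma isLip0_dist_test : isLip0 dist_test.
Proof.
split; first by rewrite /dist_test subrr.
by exists 1 => p q; rewrite mul1r; apply: le_trans (dist_test_sub_le p q) (F1 p q).
Qed.

Lemma lipnorm_dist_test_le1 : lipnorm dist_test <= 1.
Proof.
by apply: lipnorm_le => // p q; rewrite mul1r; apply: le_trans (dist_test_sub_le p q) (F1 p q).
Qed.

Lemma molecule_dist_test x : molecule x y dist_test = `|F x - F y| / `|x - y|.
Proof.
rewrite molecule_lip; last exact: isLip0_dist_test.
by rewrite /slope /dist_test subrr normr0 sub0r opprK subrK mulrC.
Qed.

End DistanceTest.

Lemma freenorm_molecule (X : normedModType RR) (x y : X) : x != y -> freenorm (molecule x y) = 1.
Proof.
move=> xy; apply/eqP; rewrite eq_le freenorm_molecule_le1 /=.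
have id1 (p q : X) : `|id p - id q| <= `|p - q| by [].
have := Free_le_freenorm (molecule_Free x y) (isLip0_dist_test y id1).
rewrite molecule_dist_test //= mulfV ?normr_eq0 ?subr_eq0 // normr1 => /le_trans; apply.
by rewrite ler_piMr ?freenorm_ge0 ?(lipnorm_dist_test_le1 y id1) //; apply: molecule_Free.
Qed.

Section OperatorsOnFree.
Variables (X Y : normedModType RR) (T : ((X -> RR^o) -> RR) -> Y).
Implicit Types (phi : (X -> RR^o) -> RR) (s : seq (RR * X)).

Lemma norm_le_opnorm M phi : (forall psi, Free_ball psi -> `|T psi| <= M) ->
  Free_ball phi -> `|T phi| <= opnorm T.
Proof.
move=> hM hphi; apply: sup_upper_bound; last by exists phi.
split; first by exists `|T phi|, phi.
by exists M => _ [psi hpsi <-]; apply: hM.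
Qed.

Lemma opnorm_le c : (forall phi, Free_ball phi -> `|T phi| <= c) -> opnorm T <= c.
Proof.
move=> hc; apply: ge_sup; last by move=> _ [phi /hc hphi <-].
exists `|T (fin_free [::])|, (fin_free [::]) => //.
by split; [exact: fin_free_Free | apply: freenorm_le => // g lg _; rewrite fin_free_nil normr0].
Qed.

Hypothesis hT : is_linear_on_Free T.

Lemma op_zero : T (fun=> 0) = 0.
Proof.
have hz : Free (fun _ : X -> RR^o => 0 : RR) by rewrite -fin_free_nil; apply: fin_free_Free.
have := hT 1 hz hz; under [X in T X = _]funext => g do rewrite mul1r addr0.
by rewrite scale1r => h; apply: (addrI (T (fun=> 0))); rewrite addr0 -h.
Qed.

Lemma opZ a phi : Free phi -> T (fun g => a * phi g) = a *: T phi.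
Proof.
move=> hphi; have hz : Free (fun _ : X -> RR^o => 0 : RR).
  by rewrite -fin_free_nil; apply: fin_free_Free.
by have := hT a hphi hz; under [X in T X = _]funext => g do rewrite addr0; rewrite op_zero addr0.
Qed.

Definition op_points (p : X) : Y := T (fin_free [:: (1, p)]).

Lemma op_fin_free s : T (fin_free s) = comb op_points s.
Proof.
elim: s => [|[a p] s IH]; first by rewrite fin_free_nil op_zero /comb big_nil.
have -> : fin_free ((a, p) :: s) = fun g => a * fin_free [:: (1, p)] g + fin_free s g.
  apply: funext => g; rewrite /fin_free; case: ifP => _; last by rewrite mulr0 addr0.
  by rewrite /deltas_comb !big_cons big_nil mul1r addr0.
by rewrite hT ?IH; [rewrite /comb big_cons | exact: fin_free_Free ..].
Qed.

Lemma slope_op_points p q : slope op_points p q = T (molecule p q).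
Proof. by rewrite /molecule op_fin_free comb_mol_seq. Qed.

Lemma op_points0 : op_points 0 = 0.
Proof.
rewrite /op_points -op_zero; congr T; apply: funext => g; rewrite /fin_free.
by case: ifP => // /asboolP [g0 _]; rewrite /deltas_comb big_seq1 g0 mulr0.
Qed.

Lemma norm_op_le c phi e : (forall psi, Free_ball psi -> `|T psi| <= c) ->
  Free phi -> 0 < e -> freenorm phi <= e -> `|T phi| <= c * e.
Proof.
move=> hc hphi e0 phi_e.
have hz : Free (fun _ : X -> RR^o => 0 : RR) by rewrite -fin_free_nil; apply: fin_free_Free.
have hphi' : Free (fun g => e^-1 * phi g).
  by have := Free_lin e^-1 hphi hz; under [X in Free X]funext => g do rewrite addr0.
have : Free_ball (fun g => e^-1 * phi g).
  split => //; apply: freenorm_le => // g lg Lg.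
  rewrite normrM gtr0_norm ?invr_gt0 // ler_pdivrMl // mulr1.
  apply: le_trans (Free_le_freenorm hphi lg) _.
  by rewrite -[e]mulr1 ler_pM ?freenorm_ge0 ?lipnorm_ge0.
move=> /hc; rewrite opZ // normrZ gtr0_norm ?invr_gt0 // ler_pdivrMl //.
by rewrite mulrC.
Qed.

Lemma lipnorm_op_points_le M : (forall psi, Free_ball psi -> `|T psi| <= M) ->
  lipnorm op_points <= opnorm T.
Proof.
move=> hM; have hball p q := norm_le_opnorm hM (molecule_ball p q).
have c0 : 0 <= opnorm T by apply: le_trans (hball 0 0); apply: normr_ge0.
by apply/lipnorm_le/lip_of_slope_le => // p q _; rewrite slope_op_points.
Qed.

End OperatorsOnFree.

Lemma is_linear_on_FreeB (X Y : normedModType RR) (S T : ((X -> RR^o) -> RR) -> Y) :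
  is_linear_on_Free S -> is_linear_on_Free T -> is_linear_on_Free (fun phi => S phi - T phi).
Proof. by move=> hS hT a phi psi hphi hpsi; rewrite hS // hT // scalerBr opprD addrACA. Qed.

Section CompactOperators.
Variables (X Y : normedModType RR) (T : ((X -> RR^o) -> RR) -> Y).
Hypothesis hT : is_compact_op T.

Lemma compact_op_bounded : exists M, forall phi, Free_ball phi -> `|T phi| <= M.
Proof.
have [M [_ hM]] := compact_bounded hT.2.
by exists (M + 1) => phi bphi; apply: hM; [lra | apply: subset_closure; exists phi].
Qed.

Lemma norm_le_opnorm_compact phi : Free_ball phi -> `|T phi| <= opnorm T.
Proof. by have [M hM] := compact_op_bounded; apply: norm_le_opnorm hM. Qed.

Lemma isLip0K_op_points : isLip0K (op_points T).
Proof.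
have [M hM] := compact_op_bounded.
have M0 : 0 <= M by apply: le_trans (hM _ (molecule_ball 0 0)).
split.
  split; first exact: op_points0 hT.1.
  exists M; apply: lip_of_slope_le => // p q _; rewrite slope_op_points; last exact: hT.1.
  exact: hM (molecule_ball p q).
apply: (subclosed_compact _ hT.2); first exact: closed_closure.
apply: closureS => _ [[p q] /= pq <-]; rewrite slope_op_points; last exact: hT.1.
by exists (molecule p q) => //; apply: molecule_ball.
Qed.

End CompactOperators.

Section LinearizationOperator.
Variables (X : normedModType RR) (Y : completeNormedModType RR) (f : X -> Y).
Hypotheses (hf : isLip0 f) (hf1 : lipnorm f <= 1).
Let Tf := linearization f.

Lemma linearization_molecule p q : Tf (molecule p q) = slope f p q.
Proof. by rewrite /Tf linearization_fin_free // comb_mol_seq. Qed.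

Lemma op_points_linearization : op_points Tf = f.
Proof.
apply: funext => p; rewrite /op_points /Tf linearization_fin_free //.
by rewrite /comb big_seq1 scale1r.
Qed.

Lemma norm_linearization_ball phi : Free_ball phi -> `|Tf phi| <= 1.
Proof. by move=> [hphi phi1]; apply: le_trans (norm_linearization_le hf hf1 hphi) phi1. Qed.

Lemma opnorm_linearization : lipnorm f = 1 -> opnorm Tf = 1.
Proof.
move=> f1; apply/eqP; rewrite eq_le opnorm_le; last exact: norm_linearization_ball.
rewrite /= -{1}f1 -{1}op_points_linearization.
exact: (@lipnorm_op_points_le _ _ Tf (linearization_lin hf hf1) 1 norm_linearization_ball).
Qed.

Lemma linearization_compact :
  compact (closure [set slope f p.1 p.2 | p in [set p : X * X | p.1 != p.2]]) ->
  compact (closure (Tf @` @Free_ball X)).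
Proof.
set A := closure _ => cA; apply/totally_bounded_compact/totally_bounded_approx => e e0.
exists [set \sum_(u <- t) u.1 *: u.2 |
    t in [set t : seq (RR * Y) | (forall u, u \in t -> A u.2) /\ \sum_(u <- t) `|u.1| <= 2]].
  exact/totally_bounded_absconv/compact_totally_bounded.
move=> _ [phi [hphi phi1] <-].
pose d := Num.min (1 / 2) (e / 2).
have d0 : 0 < d by rewrite lt_min !divr_gt0.
have d_half : d <= 1 / 2 by rewrite ge_min lexx.
have d_e : d < e by rewrite gt_min orbC ltr_pdivrMr // ltr_pMr // ltr1n.
have [s [t [hs gt ct ht]]] := Free_ball_mol_approx hphi phi1 d0.
exists (mol_comb f t).
  exists [seq (u.1, slope f u.2.1 u.2.2) | u <- t]; last by rewrite big_map.
  split; first by move=> _ /mapP [u /gt ut ->]; apply: subset_closure; exists u.2.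
  rewrite big_map; apply: le_trans ct _; lra.
rewrite -ht ?hf.1 //; apply: le_lt_trans (linearization_fin_approx hf hf1 hphi (ltW d0) hs) _.
exact: d_e.
Qed.

End LinearizationOperator.

Lemma exists_both_near_one (T : eqType) (t : seq T) (a A B : T -> RR) (d e : RR) :
  0 < d -> 0 < e -> (forall u, 0 <= a u) ->
  (forall u, u \in t -> A u <= 1) -> (forall u, u \in t -> B u <= 1) ->
  (\sum_(u <- t) a u - \sum_(u <- t) a u * A u) / d +
  (\sum_(u <- t) a u - \sum_(u <- t) a u * B u) / e < \sum_(u <- t) a u ->
  exists2 u, u \in t & 1 - d < A u /\ 1 - e < B u.
Proof.
move=> d0 e0 a0 A1 B1 hsum.
pose D u := (1 - A u) / d + (1 - B u) / e - 1.
have : \sum_(u <- t) a u * D u < 0.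
  have -> : \sum_(u <- t) a u * D u =
      \sum_(u <- t) ((a u - a u * A u) / d + (a u - a u * B u) / e - a u).
    by apply: eq_bigr => u _; rewrite /D; field; rewrite !gt_eqF.
  by rewrite sumrB big_split /= -!mulr_suml !sumrB; lra.
have [//|no_u] := pselect (exists2 u, u \in t & 1 - d < A u /\ 1 - e < B u).
suff : 0 <= \sum_(u <- t) a u * D u by lra.
rewrite big_seq; apply: sumr_ge0 => u ut; rewrite mulr_ge0 // leNgt; apply/negP => Du.
apply: no_u; exists u => //.
have : 0 <= (1 - A u) / d by rewrite divr_ge0 ?subr_ge0 ?A1 ?ltW.
have : 0 <= (1 - B u) / e by rewrite divr_ge0 ?subr_ge0 ?B1 ?ltW.
rewrite /D in Du => Be Ad.
have : (1 - A u) / d < 1 by lra.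
have : (1 - B u) / e < 1 by lra.
by rewrite !ltr_pdivrMr // !mul1r; split; lra.
Qed.

Lemma compact_cvg_subseq (V : normedModType RR) (K : set V) (u : nat -> V) :
  compact K -> (forall k, K (u k)) ->
  exists z (phi : nat -> nat), [/\ K z, forall m, (m <= phi m)%N & (u \o phi) @ \oo --> z].
Proof.
move=> cK Ku; have [|z [Kz cz]] := cK (u @ \oo) _; first by exists 0%N => // k _; apply: Ku.
have near_z m : exists k, (m <= k)%N /\ `|z - u k| < m.+1%:R^-1.
  have tail : (u @ \oo) (u @` [set k | (m <= k)%N]) by exists m => // k mk; exists k.
  have [_ [[k mk <-] zk]] := cz _ _ tail (nbhsx_ballx z _ (invSn_gt0 m)).
  by exists k; rewrite -ball_normE in zk.
pose phi m := xget 0%N [set k | (m <= k)%N /\ `|z - u k| < m.+1%:R^-1].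
have phiP m : (m <= phi m)%N /\ `|z - u (phi m)| < m.+1%:R^-1 := xgetPex 0%N (near_z m).
exists z, phi; split => //; first by move=> m; case: (phiP m).
apply/cvgrPdist_lt => e e0; have [N hN] := invSn_lt e0.
by exists N => // m hm /=; apply: lt_trans (hN m hm); case: (phiP m).
Qed.

Section NormAttainingOperator.
Variables (X Y : completeNormedModType RR) (S : ((X -> RR^o) -> RR) -> Y).
Variable v : (X -> RR^o) -> RR.
Hypotheses (hS : is_compact_op S) (hS1 : opnorm S = 1).
Hypotheses (hv : Free v) (hv1 : freenorm v = 1) (hSv : `|S v| = 1).
Let g := op_points S.

Lemma norm_op_ball_le1 phi : Free_ball phi -> `|S phi| <= 1.
Proof. by rewrite -hS1; apply: norm_le_opnorm_compact. Qed.

Lemma norm_slope_op_points_le1 p q : `|slope g p q| <= 1.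
Proof. by rewrite slope_op_points; [exact/norm_op_ball_le1/molecule_ball | exact: hS.1]. Qed.

Lemma lipnorm_op_points_le1 : lipnorm g <= 1.
Proof.
have [M hM] := compact_op_bounded hS.
by rewrite -hS1; apply: lipnorm_op_points_le hS.1 _ hM.
Qed.

Lemma mol_rep_norm_attaining e : 0 < e -> exists s t,
  [/\ fin_approx v e s, distinct_pairs t, mol_cost t <= 1 + 2 * e, 1 - e <= `|mol_comb g t| &
    forall (V : normedModType RR) (F : X -> V), F 0 = 0 -> comb F s = mol_comb F t].
Proof.
move=> e0; have v1 : freenorm v <= 1 by rewrite hv1.
have [s [t [hs gt ct ht]]] := Free_ball_mol_approx hv v1 e0.
exists s, t; split => //.
have : `|S (fun phi => -1 * fin_free s phi + v phi)| <= 1 * e.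
  apply: (norm_op_le hS.1 norm_op_ball_le1 _ e0); first exact: Free_lin (fin_free_Free s) hv.
  exact: freenorm_fin_approx_le hv (ltW e0) hs.
rewrite hS.1 ?op_fin_free; [|exact: hS.1|exact: fin_free_Free|exact: hv].
rewrite -(ht _ _ (op_points0 hS.1)) scaleN1r addrC mul1r.
by have := ler_distD (comb g s) (S v) 0; rewrite !subr0 hSv; lra.
Qed.

Section PairsNearlyNorming.
Variables (h : X -> Y) (x y : X) (eps : RR).
Hypotheses (hh : isLip0 h) (hh1 : lipnorm h = 1) (hhxy : `|h x - h y| / `|x - y| = 1).
Hypotheses (eps0 : 0 < eps) (hvw : freenorm (Defs.fsub v (molecule x y)) < eps).

Let h1 p q : `|h p - h q| <= `|p - q|.
Proof. by have := lipnorm_bound hh p q; rewrite hh1 mul1r. Qed.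

Let psi := dist_test h y.

Lemma test_value_ge e s : 0 <= e -> fin_approx v e s ->
  1 - freenorm (Defs.fsub v (molecule x y)) - e <= comb psi s.
Proof.
move=> e0 hs; have psi_lip := isLip0_dist_test y h1.
have : `|Defs.fsub v (molecule x y) psi| <= freenorm (Defs.fsub v (molecule x y)).
  have hfsub : Free (Defs.fsub v (molecule x y)).
    have := Free_lin (-1) (molecule_Free x y) hv.
    by under [X in Free X]funext => phi do rewrite mulN1r addrC.
  apply: le_trans (Free_le_freenorm hfsub psi_lip) _.
  by rewrite ler_piMr ?freenorm_ge0 ?lipnorm_dist_test_le1.
rewrite /Defs.fsub molecule_dist_test // hhxy.
have := hs psi psi_lip; have := lipnorm_dist_test_le1 y h1.
have := lipnorm_ge0 psi; rewrite -/psi.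
change (deltas_comb s psi) with (comb psi s).
move: (lipnorm psi) (v psi) (comb psi s) => L vp cp.
rewrite !ler_norml => ? ? /andP [? ?] /andP [? ?]; nra.
Qed.

Lemma exists_pair_nearly_norming d : 0 < d -> exists p q : X,
  [/\ p != q, 1 - d < `|slope g p q| & 1 - eps < `|h p - h q| / `|p - q|].
Proof.
move=> d0; pose e0 := freenorm (Defs.fsub v (molecule x y)).
have e0_lt : e0 < eps := hvw.
(* Small enough that the averaged defects [3 e / d] and [(3 e + e0) / eps] of the
   molecules stay below their total mass [>= 1 - e]. *)
pose e := (1 - e0 / eps) / (2 * (1 + 3 / d + 3 / eps)).
have gam0 : 0 < 1 - e0 / eps by rewrite subr_gt0 ltr_pdivrMr // mul1r.
have K0 : 0 < 1 + 3 / d + 3 / eps by rewrite !addr_gt0 ?divr_gt0.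
have e_gt0 : 0 < e by rewrite divr_gt0 // mulr_gt0.
have eK : e * (1 + 3 / d + 3 / eps) = (1 - e0 / eps) / 2.
  by rewrite /e invfM mulrA -mulrA mulVf ?gt_eqF // mulr1.
have [s [t [hs gt ct g_ge ht]]] := mol_rep_norm_attaining e_gt0.
have psi_ge := test_value_ge (ltW e_gt0) hs; rewrite (ht _ _ (isLip0_dist_test y h1).1) in psi_ge.
pose a (u : RR * (X * X)) := `|u.1|.
pose A (u : RR * (X * X)) := `|slope g u.2.1 u.2.2|.
pose B (u : RR * (X * X)) := `|h u.2.1 - h u.2.2| / `|u.2.1 - u.2.2|.
have A1 u : u \in t -> A u <= 1 by move=> _; apply: norm_slope_op_points_le1.
have B1 u : u \in t -> B u <= 1.
  by move=> /gt /norm_sub_gt0 pq; rewrite /B ler_pdivrMr // mul1r.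
have aA : 1 - e <= \sum_(u <- t) a u * A u.
  apply: le_trans g_ge (le_trans (ler_norm_sum _ _ _) (ler_sum _ _)) => u _.
  by rewrite normrZ.
have aB : 1 - e0 - e <= \sum_(u <- t) a u * B u.
  apply: le_trans psi_ge (le_trans (ler_norm _) (le_trans (ler_norm_sum _ _ _) _)).
  apply: ler_sum => u _.
  rewrite (normrZ u.1 (slope psi u.2.1 u.2.2)) ler_wpM2l // norm_slope ler_wpM2r ?invr_ge0 //.
  exact: dist_test_sub_le.
have a_le : \sum_(u <- t) a u <= 1 + 2 * e := ct.
have a_ge : 1 - e <= \sum_(u <- t) a u.
  apply: le_trans aA _; rewrite big_seq [X in _ <= X]big_seq; apply: ler_sum => u ut.
  by rewrite ler_piMr ?normr_ge0 //; apply: A1.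
have [u ut [hA hB]] : exists2 u, u \in t & 1 - d < A u /\ 1 - eps < B u.
  apply: (@exists_both_near_one _ t a A B) => //; first by move=> u; apply: normr_ge0.
  have : (\sum_(u <- t) a u - \sum_(u <- t) a u * A u) / d <= 3 * e / d.
    by rewrite ler_pM2r ?invr_gt0 //; lra.
  have : (\sum_(u <- t) a u - \sum_(u <- t) a u * B u) / eps <= (3 * e + e0) / eps.
    by rewrite ler_pM2r ?invr_gt0 //; lra.
  have : e * (1 + 3 / d + 3 / eps) = e + 3 * e / d + (3 * e + e0) / eps - e0 / eps.
    by field; rewrite !gt_eqF.
  rewrite eK; have := gam0.
  by move: (3 * e / d) ((3 * e + e0) / eps) (e0 / eps) => z1 z2 z3; lra.
by exists u.2.1, u.2.2; split => //; apply: gt.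
Qed.

Lemma lipnorm_op_points : lipnorm g = 1.
Proof.
apply/eqP; rewrite eq_le lipnorm_op_points_le1; apply/ler_addgt0Pr => d d0.
have [p [q [_ gpq _]]] := exists_pair_nearly_norming d0.
by have := norm_slope_le_lipnorm (isLip0K_op_points hS).1 p q; lra.
Qed.

Lemma slopes_op_points_cvg : exists (z : Y) (vv ww : nat -> X),
  [/\ `|z| = 1, forall n, vv n != ww n,
      forall n, 1 - eps < `|h (vv n) - h (ww n)| / `|vv n - ww n| &
      (fun n => slope g (vv n) (ww n)) @ \oo --> z].
Proof.
pose good k (pq : X * X) := [/\ pq.1 != pq.2, 1 - k.+1%:R^-1 < `|slope g pq.1 pq.2| &
  1 - eps < `|h pq.1 - h pq.2| / `|pq.1 - pq.2|].
pose P k := xget (0, 0) (good k).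
have PP k : good k (P k).
  apply: xgetPex; have [p [q hpq]] := exists_pair_nearly_norming (invSn_gt0 k).
  by exists (p, q).
pose u k := slope g (P k).1 (P k).2.
have [|z [phi [_ phi_ge cvz]]] := compact_cvg_subseq (u := u) hS.2.
  move=> k; apply: subset_closure; rewrite /u slope_op_points; last exact: hS.1.
  by exists (molecule (P k).1 (P k).2) => //; apply: molecule_ball.
exists z, (fun m => (P (phi m)).1), (fun m => (P (phi m)).2); split => //;
  [|by move=> n; case: (PP (phi n)) | by move=> n; case: (PP (phi n))].
have norm_u1 : `|u (phi m)| @[m --> \oo] --> (1 : RR^o).
  apply/(@cvgrPdist_lt _ RR^o) => e e0; have [N hN] := invSn_lt e0.
  exists N => // m hm /=; have [_ lt _] := PP (phi m).
  have u1 : `|u (phi m)| <= 1 by apply: norm_slope_op_points_le1.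
  rewrite ger0_norm ?subr_ge0 //; have := hN _ (leq_trans hm (phi_ge m)).
  by move: lt; rewrite -/(u (phi m)); move: (_%:R^-1) => r; lra.
exact: norm_cvg_unique (cvg_norm cvz) norm_u1.
Qed.

End PairsNearlyNorming.

Lemma lipnorm_op_points_sub_lt (f : X -> Y) eps : isLip0 f -> lipnorm f <= 1 ->
  opnorm (fun phi => S phi - linearization f phi) < eps -> lipnorm (g \- f) < eps.
Proof.
move=> hf hf1 hST; have [M hM] := compact_op_bounded hS.
have -> : g \- f = op_points (fun phi => S phi - linearization f phi).
  by apply: funext => p; rewrite /= -{1}(op_points_linearization hf hf1).
have hST_bound phi : Free_ball phi -> `|S phi - linearization f phi| <= M + 1.
  move=> hphi; apply: le_trans (ler_normB _ _) _.
  by apply: lerD; [exact: hM | exact: norm_linearization_ball].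
apply: le_lt_trans hST; apply: lipnorm_op_points_le hST_bound.
exact: is_linear_on_FreeB hS.1 (linearization_lin hf hf1).
Qed.

End NormAttainingOperator.

Theorem lemma4p2 (X Y : completeNormedModType RR) (eta : RR -> RR)
  (eta_pos : forall e : RR, 0 < e < 1 -> 0 < eta e)
  (hBPB : BPBp_compact X Y eta)
  (eps : RR) (heps : 0 < eps < 1)
  (f : X -> Y) (hf : isLip0K f) (hf1 : lipnorm f = 1)
  (x y : X) (hxy : x != y)
  (hfxy : `|f x - f y| / `|x - y| > 1 - eta eps) :
  forall h : X -> Y, isLip0 h -> lipnorm h = 1 -> `|h x - h y| / `|x - y| = 1 ->
  exists (g : X -> Y) (z : Y) (v w : nat -> X),
    isLip0K g /\ lipnorm g = 1 /\ `|z| = 1 /\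
    (forall n, v n != w n) /\
    lipnorm (g \- f) < eps /\
    (forall n, `|h (v n) - h (w n)| / `|v n - w n| > 1 - eps) /\
    (fun n => slope g (v n) (w n)) @ \oo --> z.
Proof.
move=> h hh hh1 hhxy; have [hf0 hfK] := hf.
have f_le1 : lipnorm f <= 1 by rewrite hf1.
have [eps0 _] := andP heps.
have Tf_compact : is_compact_op (linearization f).
  by split; [exact: linearization_lin | exact: linearization_compact].
have Tf_mol : `|linearization f (molecule x y)| > 1 - eta eps.
  by rewrite linearization_molecule // norm_slope.
have [S [v [hS [hS1 [hv [hv1 [hSv [hST hvw]]]]]]]] :=
  hBPB eps heps _ Tf_compact (opnorm_linearization hf0 f_le1 hf1) _ (molecule_Free x y)
    (freenorm_molecule hxy) Tf_mol.
have [z [vv [ww [z1 vw hvw' cvz]]]] := slopes_op_points_cvg hS hS1 hv hv1 hSv hh hh1 hhxy eps0 hvw.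
exists (op_points S), z, vv, ww; split; first exact: isLip0K_op_points.
have g1 := lipnorm_op_points hS hS1 hv hv1 hSv hh hh1 hhxy eps0 hvw.
split; first exact g1.
by do 2 (split => //); split; first exact: lipnorm_op_points_sub_lt hf0 f_le1 hST.
Qed.
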